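(* In the Com-IC model, for any fixed $\mathcal{B}$-seed set $S_\mathcal{B}$, the function $S_\mathcal{A}\mapsto\sigma_\mathcal{A}(S_\mathcal{A},S_\mathcal{B})$ is monotonically non-decreasing for every GAP vector in $\mathbf{Q}^+\cup\mathbf{Q}^-$. Moreover, for any fixed $\mathcal{A}$-seed set $S_\mathcal{A}$, the function $S_\mathcal{B}\mapsto\sigma_\mathcal{A}(S_\mathcal{A},S_\mathcal{B})$ is monotonically non-decreasing for every GAP vector in $\mathbf{Q}^+$ and monotonically non-increasing for every GAP vector in $\mathbf{Q}^-$.
   Context: Com-IC model. Let $G=(V,E,p)$ be a directed graph with $p:E\to[0,1]$, write $p_{u,v}=p(u,v)$, and $N^-(v)$ for the in-neighbours of $v$. Two items $\mathcal{A},\mathcal{B}$; GAPs $\mathbf{Q}=(q_{\mathcal{A}|\emptyset},q_{\mathcal{A}|\mathcal{B}},q_{\mathcal{B}|\emptyset},q_{\mathcal{B}|\mathcal{A}})\in[0,1]^4$. Given seed sets $S_\mathcal{A},S_\mathcal{B}\subseteq V$, randomness: each edge $(u,v)$ independently live w.p. $p_{u,v}$; each node $v$ independently draws $\alpha^v_\mathcal{A},\alpha^v_\mathcal{B}$ uniform on $[0,1]$, a uniformly random permutation $\pi_v$ of $N^-(v)$, and a fair coin $\tau_v\in\{\mathcal{A},\mathcal{B}\}$. For each item $X$ each node is $X$-idle, $X$-suspended, $X$-adopted or $X$-rejected; initially all idle. At step $0$ nodes of $S_\mathcal{A}$ become $\mathcal{A}$-adopted and nodes of $S_\mathcal{B}$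 become $\mathcal{B}$-adopted (order for nodes in both given by $\tau_v$). At step $t\ge1$, $v$ is informed of $X$ by in-neighbour $u$ if $(u,v)$ is live and $u$ adopted $X$ at step $t-1$; informing in-neighbours are processed in order $\pi_v$ (an in-neighbour that adopted both items is processed for both, in its adoption order). When $v$ is informed of $X$ ($Y$ the other item) while $X$-idle: if $Y$-adopted, $v$ becomes $X$-adopted if $\alpha^v_X\le q_{X|Y}$, else $X$-rejected; otherwise $X$-adopted if $\alpha^v_X\le q_{X|\emptyset}$, else $X$-suspended. Informing a non-$X$-idle node of $X$ has no effect. Reconsideration: when an $X$-suspended node becomes $Y$-adopted, it becomes $X$-adopted if $\alpha^v_X\le q_{X|Y}$, else $X$-rejected. The process stops when nothing changes. $\sigma_\mathcal{A}(S_\mathcal{A},S_\mathcal{B})$ is the expected final number of $\mathcal{A}$-adopted nodes. $\mathbf{Q}^+$: $q_{\mathcal{A}|\emptyset}\le q_{\mathcal{A}|\mathcal{B}}$ and $q_{\mathcal{B}|\emptyset}\le q_{\mathcal{B}|\mathcal{A}}$. $\mathbf{Q}^-$: $q_{\mathcal{A}|\emptyset}\ge q_{\mathcal{A}|\mathcal{B}}$ and $q_{\mathcal{B}|\emptyset}\ge q_{\mathcal{B}|\mathcal{A}}$. *)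

From HB Require Import structures.
From mathcomp Require Import all_boot all_order all_algebra all_fingroup.
Set Implicit Arguments. Unset Strict Implicit. Unset Printing Implicit Defensive.
Import Order.TTheory GRing.Theory Num.Theory.
Local Open Scope ring_scope.

(* Items: true = item A, false = item B; the "other" item of X is ~~ X. *)
Definition itemA : bool := true.
Definition itemB : bool := false.

Inductive status := Idle | Susp | Adopt | Rej.
Definition is_adopt (s : status) : bool := if s is Adopt then true else false.

Record gap (R : Type) := Gap { qA0 : R; qAB : R; qB0 : R; qBA : R }.

Definition gap_valid (R : realFieldType) (Q : gap R) : Prop :=
  [/\ 0 <= qA0 Q <= 1, 0 <= qAB Q <= 1, 0 <= qB0 Q <= 1 & 0 <= qBA Q <= 1].

Definition Qplus (R : realFieldType) (Q : gap R) : Prop :=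
  qA0 Q <= qAB Q /\ qB0 Q <= qBA Q.
Definition Qminus (R : realFieldType) (Q : gap R) : Prop :=
  qA0 Q >= qAB Q /\ qB0 Q >= qBA Q.

Section ComIC.
Variables (R : realFieldType) (V : finType).
Variables (E : rel V) (p : V -> V -> R) (Q : gap R).

(* q_{X|Y} if y (the other item Y is adopted), else q_{X|emptyset} *)
Definition qcond (X y : bool) : R :=
  if X then (if y then qAB Q else qA0 Q) else (if y then qBA Q else qB0 Q).

(* Local state of a node: its per-item status, and the list of items it has
   adopted during the current step, in adoption order. *)
Definition lstate := ((bool -> status) * seq bool)%type.

Definition upd (st : bool -> status) (X : bool) (s : status) : bool -> status :=
  fun Y => if Y == X then s else st Y.

Definition adopt (a : bool -> R) (X : bool) (ls : lstate) : lstate :=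
  let: (st, l) := ls in
  let st' := upd st X Adopt in
  if st (~~ X) is Susp then
    if a (~~ X) <= qcond (~~ X) true then (upd st' (~~ X) Adopt, l ++ [:: X; ~~ X])
    else (upd st' (~~ X) Rej, rcons l X)
  else (st', rcons l X).

Definition inform (a : bool -> R) (X : bool) (ls : lstate) : lstate :=
  let: (st, l) := ls in
  if st X is Idle then
    if st (~~ X) is Adopt then
      (if a X <= qcond X true then adopt a X ls else (upd st X Rej, l))
    else if a X <= qcond X false then adopt a X ls else (upd st X Susp, l)
  else ls.

(* Global state: statuses, and items adopted at the previous step (in order). *)
Definition gstate := ((V -> bool -> status) * (V -> seq bool))%type.

Section Run.
Variables (live : V * V -> bool) (alpha : V -> bool -> R)
          (pi : V -> {perm V}) (tau : V -> bool) (SA SB : {set V}).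

Definition seeds (v : V) : seq bool :=
  if (v \in SA) && (v \in SB) then [:: tau v; ~~ tau v]
  else if v \in SA then [:: itemA] else if v \in SB then [:: itemB] else [::].

Definition init_state : gstate :=
  let loc v := foldl (fun ls X => adopt (alpha v) X ls)
                     ((fun _ => Idle), [::]) (seeds v) in
  (fun v => (loc v).1, fun v => (loc v).2).

(* step t >= 1: in-neighbours of v are processed in the order induced by the
   uniformly random permutation pi v (restricted to the live in-neighbours). *)
Definition step (g : gstate) : gstate :=
  let ev v := flatten [seq (if live (u, v) then g.2 u else [::])
                      | u <- map (pi v) (enum V)] in
  let loc v := foldl (fun ls X => inform (alpha v) X ls) (g.1 v, [::]) (ev v) in
  (fun v => (loc v).1, fun v => (loc v).2).

(* At most 2|V| steps contain an adoption; after a step with no adoption the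
   state is a fixpoint, so 2|V|+1 iterations reach the final state. *)
Definition final_state : gstate := iter (2 * #|V| + 1) step init_state.

Definition numA : nat := #|[set v | is_adopt (final_state.1 v itemA)]|.
End Run.

(* The outcome depends on alpha^v_X only through the comparisons
   alpha <= q_{X|0} and alpha <= q_{X|Y}. With lo/hi the min/max of these two
   thresholds, [0,1] splits into cells [0,lo], (lo,hi], (hi,1] of lengths
   lo, hi-lo, 1-hi, on which the outcome is constant; representatives lo, hi, 1. *)
Definition lo (X : bool) : R := Num.min (qcond X false) (qcond X true).
Definition hi (X : bool) : R := Num.max (qcond X false) (qcond X true).
Definition cell_rep (X : bool) (c : 'I_3) : R :=
  match val c with 0 => lo X | 1 => hi X | _ => 1 end.
Definition cell_w (X : bool) (c : 'I_3) : R :=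
  match val c with 0 => lo X | 1 => hi X - lo X | _ => 1 - hi X end.

Definition edge_w (live : {ffun V * V -> bool}) : R :=
  \prod_(e : V * V)
     (if E e.1 e.2 then (if live e then p e.1 e.2 else 1 - p e.1 e.2)
      else (if live e then 0 else 1)).

Definition sigmaA (SA SB : {set V}) : R :=
  \sum_(live : {ffun V * V -> bool})
  \sum_(c : {ffun V * bool -> 'I_3})
  \sum_(pi : {ffun V -> {perm V}})
  \sum_(tau : {ffun V -> bool})
    edge_w live * (\prod_(x : V * bool) cell_w x.2 (c x))
    * ((#|{perm V}|%:R)^-1 ^+ #|V|) * ((2%:R)^-1 ^+ #|V|)
    * (numA live (fun v X => cell_rep X (c (v, X))) pi tau SA SB)%:R.

End ComIC.

From mathcomp Require Import all_boot all_order all_algebra all_fingroup.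
From Stdlib Require Import FunctionalExtensionality.
Import Order.TTheory GRing.Theory Num.Theory.
Set Implicit Arguments. Unset Strict Implicit. Unset Printing Implicit Defensive.

(* Fix the randomness (live edges, the cell of each threshold alpha^v_X, the
   permutations and the tie-breaking coins): sigma_A is a nonnegative
   combination of the resulting numbers of A-adopters, so it suffices to compare
   two runs of the deterministic process that share the randomness and differ
   in their seeds.  The two runs are coupled step by step.  Under Q^+ the run
   with more seeds dominates: every node informed of, or adopting, an item in
   the first run is so in the second.  Under Q^-, with more A-seeds and fewer
   B-seeds, this holds for A while the reverse holds for B; moreover a node
   adopting both items in the same step of both runs, A first in the first run,
   adopts A first in the second as well, since its out-neighbours are informed
   in adoption order.  Whether a node preserves the coupling depends only on the
   first informing of each item, on four threshold comparisons and on its two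
   statuses in each run, so the local step is checked by exhaustive
   computation. *)

Definition is_idle (s : status) : bool := if s is Idle then true else false.
Definition is_susp (s : status) : bool := if s is Susp then true else false.
Definition is_rej (s : status) : bool := if s is Rej then true else false.

Section NodeDynamics.
(* [ok X y] abstracts the test [alpha^v_X <= q_{X|y}]: [adopt_ok] and
   [inform_ok] are [adopt] and [inform] with these tests as parameters. *)
Variable ok : bool -> bool -> bool.

Definition adopt_ok (X : bool) (ls : lstate) : lstate :=
  let: (st, l) := ls in
  let st' := upd st X Adopt in
  if st (~~ X) is Susp then
    if ok (~~ X) true then (upd st' (~~ X) Adopt, l ++ [:: X; ~~ X])
    else (upd st' (~~ X) Rej, rcons l X)
  else (st', rcons l X).

Definition inform_ok (X : bool) (ls : lstate) : lstate :=
  let: (st, l) := ls in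
  if st X is Idle then
    if st (~~ X) is Adopt then
      (if ok X true then adopt_ok X ls else (upd st X Rej, l))
    else if ok X false then adopt_ok X ls else (upd st X Susp, l)
  else ls.

Definition run_node (st : bool -> status) (e : seq bool) : lstate :=
  foldl (fun ls X => inform_ok X ls) (st, [::]) e.

Lemma inform_ok_informed X Y ls :
  ~~ is_idle (ls.1 Y) -> ~~ is_idle ((inform_ok X ls).1 Y).
Proof.
case: ls => st l; rewrite /inform_ok /adopt_ok /upd.
by case: X; case: Y; case E1: (st true); case E2: (st false);
  case: (ok true true); case: (ok true false); case: (ok false true); case: (ok false false);
  rewrite /= ?E1 ?E2.
Qed.

Lemma inform_ok_self X ls : ~~ is_idle ((inform_ok X ls).1 X).
Proof.
case: ls => st l; rewrite /inform_ok /adopt_ok /upd.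
by case: X; case E1: (st true); case E2: (st false);
  case: (ok true true); case: (ok true false); case: (ok false true); case: (ok false false);
  rewrite /= ?E1 ?E2.
Qed.

Lemma inform_ok_id X ls : ~~ is_idle (ls.1 X) -> inform_ok X ls = ls.
Proof. by case: ls => st l /=; rewrite /inform_ok; case: (st X). Qed.

Lemma foldl_inform_ok_id ls s :
  ~~ is_idle (ls.1 true) -> ~~ is_idle (ls.1 false) ->
  foldl (fun ls X => inform_ok X ls) ls s = ls.
Proof. by elim: s => //= -[] s IH h1 h2; rewrite inform_ok_id ?IH. Qed.

Definition first_occ (e : seq bool) : seq bool :=
  if e is X :: s then X :: (if ~~ X \in s then [:: ~~ X] else [::]) else [::].

Lemma foldl_inform_ok_first_occ ls X s : ~~ is_idle (ls.1 X) ->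
  foldl (fun ls Y => inform_ok Y ls) ls s =
  foldl (fun ls Y => inform_ok Y ls) ls (if ~~ X \in s then [:: ~~ X] else [::]).
Proof.
elim: s ls => //= Y s IH ls hX.
have [->|/negPf nYX] := eqVneq Y X; first by rewrite inform_ok_id // IH // in_cons; case: (X).
have -> : Y = ~~ X by move: nYX; case: (X); case: (Y).
have informed Z : ~~ is_idle ((inform_ok (~~ X) ls).1 Z).
  have [->|nZX] := eqVneq Z (~~ X); first exact: inform_ok_self.
  have -> : Z = X by move: nZX; case: (X); case: (Z).
  exact: inform_ok_informed.
by rewrite in_cons eqxx /= foldl_inform_ok_id.
Qed.

Lemma run_node_first_occ st e : run_node st e = run_node st (first_occ e).
Proof. case: e => // X s; exact: foldl_inform_ok_first_occ s (inform_ok_self X _). Qed.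

End NodeDynamics.

Lemma mem_first_occ X e : (X \in first_occ e) = (X \in e).
Proof.
case: e => // Y s; rewrite /first_occ !in_cons.
by case: X; case: Y; case: (true \in s); case: (false \in s).
Qed.

Lemma head_first_occ e : head false (first_occ e) = head false e.
Proof. by case: e. Qed.

Definition competitive (ok : bool -> bool -> bool) : bool :=
  (ok true true ==> ok true false) && (ok false true ==> ok false false).
Definition complementary (ok : bool -> bool -> bool) : bool :=
  (ok true false ==> ok true true) && (ok false false ==> ok false true).

(* Excludes status/threshold combinations that cannot arise, for which the
   local checks below would fail. *)
Definition consistent_at ok (st : bool -> status) X : bool :=
  (is_susp (st X) ==> ~~ ok X false && ~~ is_adopt (st (~~ X))) &&
  (is_rej (st X) ==> ~~ ok X true && is_adopt (st (~~ X))).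
Definition consistent ok st : bool := consistent_at ok st true && consistent_at ok st false.

Definition grows (s1 s2 : status) : bool :=
  (~~ is_idle s1 ==> ~~ is_idle s2) && (is_adopt s1 ==> is_adopt s2).
Definition dominates (st1 st2 : bool -> status) : bool :=
  grows (st1 true) (st2 true) && grows (st1 false) (st2 false).
Definition dominates_A_only (st1 st2 : bool -> status) : bool :=
  grows (st1 true) (st2 true) && grows (st2 false) (st1 false).

Definition A_first (l : seq bool) : bool := head false l.
Definition keeps_A_first (l1 l2 : seq bool) : bool :=
  [&& true \in l1, false \in l1, true \in l2, false \in l2 & A_first l1] ==> A_first l2.

Definition step_trace (st : bool -> status) (e : seq bool) (r : lstate) X : bool :=
  [&& ~~ is_idle (st X) ==> ~~ is_idle (r.1 X), is_adopt (st X) ==> is_adopt (r.1 X),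
      (X \in e) ==> ~~ is_idle (r.1 X), is_adopt (r.1 X) && (X \notin r.2) ==> is_adopt (st X)
    & (X \in r.2) ==> is_adopt (r.1 X)].

Definition node_step_spec ok st e : bool :=
  let r := run_node ok st e in
  consistent ok st ==> [&& consistent ok r.1, step_trace st e r true & step_trace st e r false].

Definition node_step_plus ok st1 st2 e1 e2 : bool :=
  [&& complementary ok, consistent ok st1, consistent ok st2, dominates st1 st2,
      (true \in e1) ==> (true \in e2) || ~~ is_idle (st2 true)
    & (false \in e1) ==> (false \in e2) || ~~ is_idle (st2 false)]
  ==> dominates (run_node ok st1 e1).1 (run_node ok st2 e2).1.

Definition node_step_minus ok st1 st2 e1 e2 : bool :=
  [&& competitive ok, consistent ok st1, consistent ok st2, dominates_A_only st1 st2,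
      (true \in e1) ==> (true \in e2) || ~~ is_idle (st2 true),
      (false \in e2) ==> (false \in e1) || ~~ is_idle (st1 false)
    & is_idle (st2 true) && is_idle (st1 false) && A_first e1 ==> A_first e2]
  ==> dominates_A_only (run_node ok st1 e1).1 (run_node ok st2 e2).1
      && keeps_A_first (run_node ok st1 e1).2 (run_node ok st2 e2).2.

Definition ok_table (b0 b1 b2 b3 : bool) : bool -> bool -> bool :=
  fun X y => if X then (if y then b1 else b0) else (if y then b3 else b2).
Definition status_pair (a b : status) : bool -> status := fun X => if X then a else b.

Definition all_bools (P : bool -> bool) : bool := P true && P false.
Definition all_statuses (P : status -> bool) : bool := [&& P Idle, P Susp, P Adopt & P Rej].
Definition all_tables (P : (bool -> bool -> bool) -> bool) : bool :=
  all_bools (fun b0 => all_bools (fun b1 => all_bools (fun b2 => all_bools (fun b3 =>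
    P (ok_table b0 b1 b2 b3))))).
Definition all_states (P : (bool -> status) -> bool) : bool :=
  all_statuses (fun a => all_statuses (fun b => P (status_pair a b))).
Definition all_first_occs (P : seq bool -> bool) : bool :=
  all P [:: [::]; [:: true]; [:: false]; [:: true; false]; [:: false; true]].

Lemma all_boolsP P : all_bools P -> forall b, P b.
Proof. by case/andP=> ? ? []. Qed.

Lemma all_statusesP P : all_statuses P -> forall s, P s.
Proof. by case/and4P=> ? ? ? ? []. Qed.

Lemma all_tablesP P : all_tables P -> forall ok, P ok.
Proof.
move=> h ok.
have -> : ok = ok_table (ok true false) (ok true true) (ok false false) (ok false true).
  by do 2 (apply: functional_extensionality => -[]).
by move: h => /all_boolsP/(_ (ok true false))/all_boolsP/(_ (ok true true))
  /all_boolsP/(_ (ok false false))/all_boolsP/(_ (ok false true)).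
Qed.

Lemma all_statesP P : all_states P -> forall st, P st.
Proof.
move=> h st; have -> : st = status_pair (st true) (st false).
  by apply: functional_extensionality => -[].
by move: h => /all_statusesP/(_ (st true))/all_statusesP/(_ (st false)).
Qed.

Lemma all_first_occsP P : all_first_occs P -> forall e, P (first_occ e).
Proof.
move=> /allP h [|X s]; apply: h => //=.
by case: X; case: (true \in s); case: (false \in s).
Qed.

Lemma node_step_spec_check :
  all_tables (fun ok => all_states (fun st => all_first_occs (node_step_spec ok st))).
Proof. by vm_compute. Qed.

Lemma node_step_plus_check :
  all_tables (fun ok => all_states (fun st1 => all_states (fun st2 =>
    all_first_occs (fun e1 => all_first_occs (node_step_plus ok st1 st2 e1))))).
Proof. by vm_compute. Qed.

Lemma node_step_minus_check :
  all_tables (fun ok => all_states (fun st1 => all_states (fun st2 =>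
    all_first_occs (fun e1 => all_first_occs (node_step_minus ok st1 st2 e1))))).
Proof. by vm_compute. Qed.

Lemma node_step_spec_first_occ ok st e :
  node_step_spec ok st (first_occ e) = node_step_spec ok st e.
Proof. by rewrite /node_step_spec /step_trace -run_node_first_occ !mem_first_occ. Qed.

Lemma node_step_plus_first_occ ok st1 st2 e1 e2 :
  node_step_plus ok st1 st2 (first_occ e1) (first_occ e2) = node_step_plus ok st1 st2 e1 e2.
Proof. by rewrite /node_step_plus -!run_node_first_occ !mem_first_occ. Qed.

Lemma node_step_minus_first_occ ok st1 st2 e1 e2 :
  node_step_minus ok st1 st2 (first_occ e1) (first_occ e2) = node_step_minus ok st1 st2 e1 e2.
Proof.
by rewrite /node_step_minus -!run_node_first_occ !mem_first_occ /A_first !head_first_occ.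
Qed.

Lemma node_stepP ok st e : node_step_spec ok st e.
Proof.
rewrite -node_step_spec_first_occ.
exact: all_first_occsP (all_statesP (all_tablesP node_step_spec_check ok) st) e.
Qed.

Lemma node_step_plusP ok st1 st2 e1 e2 : node_step_plus ok st1 st2 e1 e2.
Proof.
rewrite -node_step_plus_first_occ; have := all_tablesP node_step_plus_check ok.
by move=> /all_statesP/(_ st1)/all_statesP/(_ st2)
  /all_first_occsP/(_ e1)/all_first_occsP/(_ e2).
Qed.

Lemma node_step_minusP ok st1 st2 e1 e2 : node_step_minus ok st1 st2 e1 e2.
Proof.
rewrite -node_step_minus_first_occ; have := all_tablesP node_step_minus_check ok.
by move=> /all_statesP/(_ st1)/all_statesP/(_ st2)
  /all_first_occsP/(_ e1)/all_first_occsP/(_ e2).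
Qed.

Lemma run_node_consistent ok st e :
  consistent ok st -> consistent ok (run_node ok st e).1.
Proof. by move=> h; have /implyP/(_ h)/and3P[] := node_stepP ok st e. Qed.

Lemma run_node_spec ok st e X : consistent ok st ->
  let r := run_node ok st e in
  [/\ ~~ is_idle (st X) -> ~~ is_idle (r.1 X), is_adopt (st X) -> is_adopt (r.1 X),
      X \in e -> ~~ is_idle (r.1 X), is_adopt (r.1 X) -> X \notin r.2 -> is_adopt (st X)
    & X \in r.2 -> is_adopt (r.1 X)].
Proof.
move=> h /=; have /implyP/(_ h)/and3P[_ hA hB] := node_stepP ok st e.
have /and5P[h1 h2 h3 h4 h5] : step_trace st e (run_node ok st e) X by case: X.
split=> [/(implyP h1)|/(implyP h2)|/(implyP h3)|hX hN|/(implyP h5)] //.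
by apply: (implyP h4); rewrite hX hN.
Qed.

Lemma run_node_dominates ok st1 st2 e1 e2 :
  complementary ok -> consistent ok st1 -> consistent ok st2 -> dominates st1 st2 ->
  (true \in e1) ==> (true \in e2) || ~~ is_idle (st2 true) ->
  (false \in e1) ==> (false \in e2) || ~~ is_idle (st2 false) ->
  dominates (run_node ok st1 e1).1 (run_node ok st2 e2).1.
Proof.
move=> hok h1 h2 hd hA hB; apply: (implyP (node_step_plusP ok st1 st2 e1 e2)).
by rewrite hok h1 h2 hd hA hB.
Qed.

Lemma run_node_dominates_A_only ok st1 st2 e1 e2 :
  competitive ok -> consistent ok st1 -> consistent ok st2 -> dominates_A_only st1 st2 ->
  (true \in e1) ==> (true \in e2) || ~~ is_idle (st2 true) ->
  (false \in e2) ==> (false \in e1) || ~~ is_idle (st1 false) ->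
  is_idle (st2 true) && is_idle (st1 false) && A_first e1 ==> A_first e2 ->
  dominates_A_only (run_node ok st1 e1).1 (run_node ok st2 e2).1
  && keeps_A_first (run_node ok st1 e1).2 (run_node ok st2 e2).2.
Proof.
move=> hok h1 h2 hd hA hB hfirst; apply: (implyP (node_step_minusP ok st1 st2 e1 e2)).
by rewrite hok h1 h2 hd hA hB hfirst.
Qed.

Lemma A_first_flatten (T : Type) (s : seq T) (f1 f2 : T -> seq bool) :
  (forall u, true \in f1 u -> true \in f2 u) ->
  (forall u, false \in f2 u -> false \in f1 u) ->
  (forall u, keeps_A_first (f1 u) (f2 u)) ->
  A_first (flatten (map f1 s)) -> A_first (flatten (map f2 s)).
Proof.
move=> hA hB hkeep; elim: s => //= u s IH.
move: (hA u) (hB u) (hkeep u); rewrite /keeps_A_first /A_first.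
case: (f1 u) => [|X l1]; case: (f2 u) => [|Y l2] //=.
- by case: Y => // _ /(_ (mem_head _ _)).
- by move=> h _ _ hX; move: h; rewrite hX mem_head => /(_ isT).
move=> h1 h2 /implyP h hX; case: Y h1 h2 h => // h1 h2 h.
have tA : true \in X :: l1 by rewrite hX mem_head.
by apply: h; rewrite tA (h1 tA) (h2 (mem_head _ _)) mem_head.
Qed.

Section Run.
Variables (R : realFieldType) (V : finType) (Q : gap R).
Variables (live : V * V -> bool) (alpha : V -> bool -> R) (pi : V -> {perm V}).

Definition ok_at v : bool -> bool -> bool := fun X y => (alpha v X <= qcond Q X y)%R.

Lemma competitive_ok_at v : Qminus Q -> competitive (ok_at v).
Proof. by case=> hA hB; apply/andP; split; apply/implyP => /le_trans; apply. Qed.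

Lemma complementary_ok_at v : Qplus Q -> complementary (ok_at v).
Proof. by case=> hA hB; apply/andP; split; apply/implyP => /le_trans; apply. Qed.

Definition informs (g : gstate V) v : seq bool :=
  flatten [seq (if live (u, v) then g.2 u else [::]) | u <- map (pi v) (enum V)].

Local Notation step := (step Q live alpha pi).

Lemma step1E g v : (step g).1 v = (run_node (ok_at v) (g.1 v) (informs g v)).1.
Proof. by []. Qed.

Lemma step2E g v : (step g).2 v = (run_node (ok_at v) (g.1 v) (informs g v)).2.
Proof. by []. Qed.

Lemma informsP g v X : reflect (exists2 u, live (u, v) & X \in g.2 u) (X \in informs g v).
Proof.
apply: (iffP flatten_mapP) => [[u _]|[u hl hX]].
  by case hl: (live (u, v)) => // hX; exists u.
exists u; last by rewrite hl.
by apply/mapP; exists ((pi v)^-1 u)%g; rewrite ?mem_enum ?permKV.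
Qed.

Record wf_state (g : gstate V) : Prop := WfState {
  wf_consistent v : consistent (ok_at v) (g.1 v);
  wf_recent v X : X \in g.2 v -> is_adopt (g.1 v X);
  wf_spread u v X : live (u, v) -> is_adopt (g.1 u X) -> X \notin g.2 u -> ~~ is_idle (g.1 v X)
}.

Lemma wf_step g : wf_state g -> wf_state (step g).
Proof.
move=> wg; split=> [v|v X|u v X hl].
- by rewrite step1E; apply: run_node_consistent; apply: wf_consistent.
- rewrite step1E step2E.
  by have [_ _ _ _] := run_node_spec (informs g v) X (wf_consistent wg v); apply.
rewrite !step1E step2E => hA hN.
have [_ _ _ hold _] := run_node_spec (informs g u) X (wf_consistent wg u).
have [hpers _ hinf _ _] := run_node_spec (informs g v) X (wf_consistent wg v).
have hAu := hold hA hN.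
case hX: (X \in g.2 u); first by apply: hinf; apply/informsP; exists u.
by apply/hpers/(wf_spread wg hl hAu); rewrite hX.
Qed.

Lemma recent_transfer g1 g2 u v X : wf_state g1 -> wf_state g2 ->
  (is_adopt (g1.1 u X) -> is_adopt (g2.1 u X)) -> live (u, v) ->
  X \in g1.2 u -> (X \in g2.2 u) || ~~ is_idle (g2.1 v X).
Proof.
move=> w1 w2 hA hl hX; case h2: (X \in g2.2 u) => //=.
by apply: (wf_spread w2 hl (hA (wf_recent w1 hX))); rewrite h2.
Qed.

Lemma informs_transfer g1 g2 v X : wf_state g1 -> wf_state g2 ->
  (forall u, is_adopt (g1.1 u X) -> is_adopt (g2.1 u X)) ->
  (X \in informs g1 v) ==> (X \in informs g2 v) || ~~ is_idle (g2.1 v X).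
Proof.
move=> w1 w2 hA; apply/implyP => /informsP[u hl hX].
case/orP: (recent_transfer w1 w2 (hA u) hl hX) => [h|->]; last by rewrite orbT.
by apply/orP; left; apply/informsP; exists u.
Qed.

Definition coupled_plus (g1 g2 : gstate V) : Prop :=
  forall v, dominates (g1.1 v) (g2.1 v).
Definition coupled_minus (g1 g2 : gstate V) : Prop :=
  forall v, dominates_A_only (g1.1 v) (g2.1 v) && keeps_A_first (g1.2 v) (g2.2 v).

Lemma coupled_plus_step g1 g2 : (forall v, complementary (ok_at v)) ->
  wf_state g1 -> wf_state g2 -> coupled_plus g1 g2 -> coupled_plus (step g1) (step g2).
Proof.
move=> hQ w1 w2 hC v; rewrite !step1E.
have hA X u : is_adopt (g1.1 u X) -> is_adopt (g2.1 u X).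
  by case/andP: (hC u) => /andP[_ /implyP ?] /andP[_ /implyP ?]; case: X.
apply: run_node_dominates; rewrite ?hQ ?hC ?(wf_consistent w1) ?(wf_consistent w2) //;
  exact: informs_transfer w1 w2 (hA _).
Qed.

Lemma coupled_minus_step g1 g2 : (forall v, competitive (ok_at v)) ->
  wf_state g1 -> wf_state g2 -> coupled_minus g1 g2 -> coupled_minus (step g1) (step g2).
Proof.
move=> hQ w1 w2 hC v; rewrite !step1E !step2E.
have hA u : is_adopt (g1.1 u true) -> is_adopt (g2.1 u true).
  by case/andP: (hC u) => /andP[/andP[_ /implyP ?] _] _.
have hB u : is_adopt (g2.1 u false) -> is_adopt (g1.1 u false).
  by case/andP: (hC u) => /andP[_ /andP[_ /implyP ?]] _.
apply: run_node_dominates_A_only;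
  rewrite ?hQ ?(wf_consistent w1) ?(wf_consistent w2) ?(andP (hC v)).1 //;
  try exact: informs_transfer.
apply/implyP => /andP[/andP[idle2 idle1]]; apply: A_first_flatten => u.
- case hl: (live (u, v)) => // hX.
  by case/orP: (recent_transfer w1 w2 (hA u) hl hX); rewrite // idle2.
- case hl: (live (u, v)) => // hX.
  by case/orP: (recent_transfer w2 w1 (hB u) hl hX); rewrite // idle1.
- by case: (live (u, v)); [case/andP: (hC u)|].
Qed.

Section Seeds.
Variable tau : V -> bool.

Lemma init1E SA SB v X : (init_state Q alpha tau SA SB).1 v X =
  if (if X then v \in SA else v \in SB) then Adopt else Idle.
Proof.
rewrite /init_state /seeds /=.
by case: (v \in SA); case: (v \in SB); case: (tau v); case: X.
Qed.

Lemma init2E SA SB v : (init_state Q alpha tau SA SB).2 v = seeds tau SA SB v.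
Proof. by rewrite /init_state /seeds /=; case: (v \in SA); case: (v \in SB); case: (tau v). Qed.

Lemma mem_seeds SA SB v X : (X \in seeds tau SA SB v) = if X then v \in SA else v \in SB.
Proof. by rewrite /seeds; case: (v \in SA); case: (v \in SB); case: (tau v); case: X. Qed.

Lemma wf_init SA SB : wf_state (init_state Q alpha tau SA SB).
Proof.
split=> [v|v X|u v X _]; rewrite ?init2E ?mem_seeds ?init1E.
- by rewrite /consistent /consistent_at !init1E; case: (v \in SA); case: (v \in SB).
- by move=> ->.
by case: (if X then u \in SA else u \in SB).
Qed.

Lemma coupled_plus_init (SA1 SB1 SA2 SB2 : {set V}) :
  SA1 \subset SA2 -> SB1 \subset SB2 ->
  coupled_plus (init_state Q alpha tau SA1 SB1) (init_state Q alpha tau SA2 SB2).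
Proof.
move=> /subsetP hA /subsetP hB v; rewrite /dominates /grows !init1E.
have /implyP : (v \in SA1) -> v \in SA2 := hA v; have /implyP : (v \in SB1) -> v \in SB2 := hB v.
by case: (v \in SA1); case: (v \in SA2); case: (v \in SB1); case: (v \in SB2).
Qed.

Lemma coupled_minus_init (SA1 SB1 SA2 SB2 : {set V}) :
  SA1 \subset SA2 -> SB2 \subset SB1 ->
  coupled_minus (init_state Q alpha tau SA1 SB1) (init_state Q alpha tau SA2 SB2).
Proof.
move=> /subsetP hA /subsetP hB v; rewrite /dominates_A_only /grows /keeps_A_first !init1E !init2E.
have /implyP : (v \in SA1) -> v \in SA2 := hA v; have /implyP : (v \in SB2) -> v \in SB1 := hB v.
by rewrite /seeds; case: (v \in SA1); case: (v \in SA2); case: (v \in SB1); case: (v \in SB2);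
  case: (tau v).
Qed.

End Seeds.

Lemma wf_iter n g : wf_state g -> wf_state (iter n step g).
Proof. by move=> wg; elim: n => //= n; apply: wf_step. Qed.

Lemma numA_mono_plus tau (SA1 SB1 SA2 SB2 : {set V}) : Qplus Q ->
  SA1 \subset SA2 -> SB1 \subset SB2 ->
  (numA Q live alpha pi tau SA1 SB1 <= numA Q live alpha pi tau SA2 SB2)%N.
Proof.
move=> hQ hA hB; apply/subset_leq_card/subsetP => v; rewrite !inE.
have: coupled_plus (final_state Q live alpha pi tau SA1 SB1)
                   (final_state Q live alpha pi tau SA2 SB2).
  rewrite /final_state; elim: (2 * #|V| + 1)%N => [|n IH] /=; first exact: coupled_plus_init.
  by apply: coupled_plus_step (complementary_ok_at ^~ hQ) _ _ IH; apply/wf_iter/wf_init.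
by move=> /(_ v)/andP[/andP[_ /implyP]].
Qed.

Lemma numA_mono_minus tau (SA1 SB1 SA2 SB2 : {set V}) : Qminus Q ->
  SA1 \subset SA2 -> SB2 \subset SB1 ->
  (numA Q live alpha pi tau SA1 SB1 <= numA Q live alpha pi tau SA2 SB2)%N.
Proof.
move=> hQ hA hB; apply/subset_leq_card/subsetP => v; rewrite !inE.
have: coupled_minus (final_state Q live alpha pi tau SA1 SB1)
                    (final_state Q live alpha pi tau SA2 SB2).
  rewrite /final_state; elim: (2 * #|V| + 1)%N => [|n IH] /=; first exact: coupled_minus_init.
  by apply: coupled_minus_step (competitive_ok_at ^~ hQ) _ _ IH; apply/wf_iter/wf_init.
by move=> /(_ v)/andP[/andP[/andP[_ /implyP]]].
Qed.

End Run.

Local Open Scope ring_scope.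

Lemma cell_w_ge0 (R : realFieldType) (Q : gap R) X c : gap_valid Q -> 0 <= cell_w Q X c.
Proof.
case=> hA0 hAB hB0 hBA.
have /andP[q0 q0'] : 0 <= qcond Q X false <= 1 by case: (X).
have /andP[q1 q1'] : 0 <= qcond Q X true <= 1 by case: (X).
rewrite /cell_w /lo /hi; case: c => -[|[|k]] _ /=.
- by rewrite le_min q0 q1.
- by rewrite subr_ge0 ge_min !le_max lexx.
- by rewrite subr_ge0 ge_max q0' q1'.
Qed.

Lemma edge_w_ge0 (R : realFieldType) (V : finType) (E : rel V) (p : V -> V -> R) live :
  (forall u v, E u v -> 0 <= p u v <= 1) -> 0 <= edge_w E p live.
Proof.
move=> Hp; apply: prodr_ge0 => e _; case hE: (E e.1 e.2); case: (live e) => //.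
- by case/andP: (Hp _ _ hE).
- by case/andP: (Hp _ _ hE) => _; rewrite subr_ge0.
Qed.

Lemma sigmaA_le_pointwise (R : realFieldType) (V : finType) (E : rel V) (p : V -> V -> R)
    (Q : gap R) (SA1 SB1 SA2 SB2 : {set V}) :
  (forall u v, E u v -> 0 <= p u v <= 1) -> gap_valid Q ->
  (forall live alpha pi tau,
    numA Q live alpha pi tau SA1 SB1 <= numA Q live alpha pi tau SA2 SB2)%N ->
  sigmaA E p Q SA1 SB1 <= sigmaA E p Q SA2 SB2.
Proof.
move=> Hp HQ hnum; do 4 (apply: ler_sum => ? _).
rewrite ler_wpM2l ?ler_nat //.
rewrite !mulr_ge0 ?exprn_ge0 ?invr_ge0 ?ler0n ?edge_w_ge0 //.
by apply: prodr_ge0 => x _; apply: cell_w_ge0.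
Qed.

Unset Implicit Arguments.

Theorem theorem3 (R : realFieldType) (V : finType) (E : rel V)
  (p : V -> V -> R) (Q : gap R)
  (Hp : forall u v, E u v -> 0 <= p u v <= 1) (HQ : gap_valid Q) :
  ((Qplus Q \/ Qminus Q) ->
     forall SB SA SA' : {set V}, SA \subset SA' ->
       sigmaA E p Q SA SB <= sigmaA E p Q SA' SB)
  /\ (Qplus Q ->
     forall SA SB SB' : {set V}, SB \subset SB' ->
       sigmaA E p Q SA SB <= sigmaA E p Q SA SB')
  /\ (Qminus Q ->
     forall SA SB SB' : {set V}, SB \subset SB' ->
       sigmaA E p Q SA SB' <= sigmaA E p Q SA SB).
Proof.
split; [|split] => [hQ SB SA SA' hA|hQ SA SB SB' hB|hQ SA SB SB' hB];
  apply: sigmaA_le_pointwise => // live alpha pi tau.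
- by case: hQ => hQ; [exact: numA_mono_plus | exact: numA_mono_minus].
- exact: numA_mono_plus.
- exact: numA_mono_minus.
Qed.
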